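(* Let $(L,\vee,\wedge,0,1)$ be a complemented lattice with $0\ne1$ and $a,b,c\in L$. Then: (i) $a\to0=a^+$ and $1\to a=\{a\}$; (ii) if $a\le b$ then $a\to b=\{1\}$; (iii) $a\to b=\{1\}$ if and only if $a\wedge b\in a^{++}$; (iv) if $b\in a^+$ then $a\to b=a^+$; (v) if $b\le c$ then $a\to b\le_i a\to c$ for $i=1,2$; (vi) if $a\to b=a\to c=\{1\}$ and $a^{++}$ is closed under $\wedge$, then $a\to(b\wedge c)=\{1\}$; (vii) if $a^{++}\subseteq b^{++}$ and $a\to b=\{1\}$, then $b\to a=\{1\}$.
   Context: For $a\in L$, $a^+:=\{x\in L\mid a\vee x=1,\ a\wedge x=0\}$ (the set of all complements of $a$); for $A\subseteq L$, $A^+:=\{x\in L\mid a\vee x=1\text{ and }a\wedge x=0\text{ for all }a\in A\}$, and $a^{++}:=(a^+)^+$. For $A,B\subseteq L$: $A\vee B:=\{x\vee y\mid x\in A,y\in B\}$; $A\le_1B$ means for every $x\in A$ there is $y\in B$ with $x\le y$; $A\le_2B$ means for every $y\in B$ there is $x\in A$ with $x\le y$. For $a,b\in L$, $a\to b:=a^+\vee\{a\wedge b\}=\{x\vee(a\wedge b)\mid x\in a^+\}$. *)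

From mathcomp Require Import all_boot all_order.
Set Implicit Arguments. Unset Strict Implicit. Unset Printing Implicit Defensive.
Import Order.TTheory.
Local Open Scope order_scope.

(* Subsets of L are predicates L -> Prop; equality of subsets is Leibniz
   equality of predicates (extensional by funext/propext). *)
Section CompLat.
Context {d : Order.disp_t} {L : tbLatticeType d}.

Definition complemented : Prop :=
  forall a : L, exists x : L, a `|` x = \top /\ a `&` x = \bot.

Definition cplt (a : L) : L -> Prop :=
  fun x => a `|` x = \top /\ a `&` x = \bot.

Definition cpltS (A : L -> Prop) : L -> Prop :=
  fun x => forall a, A a -> a `|` x = \top /\ a `&` x = \bot.

Definition cplt2 (a : L) : L -> Prop := cpltS (cplt a).

Definition joinS (A B : L -> Prop) : L -> Prop :=
  fun z => exists x y, A x /\ B y /\ z = x `|` y.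

Definition sing (a : L) : L -> Prop := fun z => z = a.

Definition imp (a b : L) : L -> Prop := joinS (cplt a) (sing (a `&` b)).

Definition le1 (A B : L -> Prop) : Prop :=
  forall x, A x -> exists y, B y /\ x <= y.

Definition le2 (A B : L -> Prop) : Prop :=
  forall y, B y -> exists x, A x /\ x <= y.

Definition meetclosedS (S : L -> Prop) : Prop :=
  forall x y, S x -> S y -> S (x `&` y).

Definition subsetS (A B : L -> Prop) : Prop := forall x, A x -> B x.

End CompLat.

(* Every element of a -> b has the form x \/ (a /\ b) with x a complement of a,
   and complements exist, so a -> b = {1} says exactly that every complement x
   of a satisfies x \/ (a /\ b) = 1.  Since x /\ (a /\ b) <= x /\ a = 0 holds
   anyway, this means a /\ b is a complement of every complement of a, i.e.
   a /\ b is in a^{++}.  All other items are bookkeeping around this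
   characterisation and the monotonicity of y |-> x \/ y. *)
From Stdlib Require Import FunctionalExtensionality PropExtensionality.
From mathcomp Require Import all_boot all_order.
Import Order.TTheory.
Local Open Scope order_scope.

Lemma pred_ext {T : Type} (A B : T -> Prop) : (forall z, A z <-> B z) -> A = B.
Proof.
move=> AB; apply: functional_extensionality => z.
exact: propositional_extensionality.
Qed.

Section ComplementImplication.
Context {d : Order.disp_t} {L : tbLatticeType d}.
Implicit Types (a b c t x y : L) (A : L -> Prop).

Lemma joinS_singP A c z : joinS A (sing c) z <-> exists2 x, A x & z = x `|` c.
Proof.
split; first by case=> [x [_ [Ax [-> ->]]]]; exists x.
by case=> x Ax ->; exists x, c.
Qed.

Lemma joinS_sing0 A : joinS A (sing \bot) = A.
Proof.
apply: pred_ext => z; rewrite joinS_singP.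
by split; [case=> x Ax ->; rewrite joinx0 | exists z; rewrite ?joinx0].
Qed.

Lemma joinS_sing2 x y : joinS (sing x) (sing y) = sing (x `|` y).
Proof.
by apply: pred_ext => z; rewrite joinS_singP; split; [case=> _ -> | exists x].
Qed.

Lemma joinS_sing_eq_sing A c t : (exists x, A x) ->
  joinS A (sing c) = sing t <-> forall x, A x -> x `|` c = t.
Proof.
move=> [x0 Ax0]; split=> [AcE x Ax | Act].
  by have := joinS_singP A c (x `|` c); rewrite AcE; case=> _; apply; exists x.
apply: pred_ext => z; rewrite joinS_singP.
by split; [case=> x Ax ->; apply: Act | move=> ->; exists x0; rewrite ?Act].
Qed.

Lemma joinS_sing_le1 A c c' : c <= c' -> le1 (joinS A (sing c)) (joinS A (sing c')).
Proof.
move=> le_cc' _ /joinS_singP[x Ax ->].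
by exists (x `|` c'); split; [apply/joinS_singP; exists x | rewrite leU2].
Qed.

Lemma joinS_sing_le2 A c c' : c <= c' -> le2 (joinS A (sing c)) (joinS A (sing c')).
Proof.
move=> le_cc' _ /joinS_singP[x Ax ->].
by exists (x `|` c); split; [apply/joinS_singP; exists x | rewrite leU2].
Qed.

Lemma cplt_top : cplt \top = sing (\bot : L).
Proof.
apply: pred_ext => x; rewrite /cplt /sing meet1x.
by split=> [[] | ->]; rewrite ?joinx0.
Qed.

Lemma cplt2_le a y : y <= a ->
  cplt2 a y <-> forall x, cplt a x -> x `|` y = \top.
Proof.
move=> le_ya; split=> [a2y x ax | xy_top x ax]; first by case: (a2y x ax).
split; first exact: xy_top.
by apply/eqP; rewrite eq_le le0x -ax.2 meetC leI2.
Qed.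

Lemma imp_meet0 a b : a `&` b = \bot -> imp a b = cplt a.
Proof. by rewrite /imp => ->; rewrite joinS_sing0. Qed.

Lemma imp_top_l a : imp \top a = sing a.
Proof. by rewrite /imp cplt_top joinS_sing2 meet1x join0x. Qed.

Lemma imp_le1 a b c : b <= c -> le1 (imp a b) (imp a c).
Proof. by move=> le_bc; apply: joinS_sing_le1; rewrite leI2. Qed.

Lemma imp_le2 a b c : b <= c -> le2 (imp a b) (imp a c).
Proof. by move=> le_bc; apply: joinS_sing_le2; rewrite leI2. Qed.

Hypothesis L_complemented : complemented (L := L).

Lemma imp_eq_top a b :
  imp a b = sing \top <-> forall x, cplt a x -> x `|` (a `&` b) = \top.
Proof. exact/joinS_sing_eq_sing/L_complemented. Qed.

Lemma imp_eq_topE a b : imp a b = sing \top <-> cplt2 a (a `&` b).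
Proof. by rewrite imp_eq_top cplt2_le ?leIl. Qed.

Lemma imp_le_top a b : a <= b -> imp a b = sing \top.
Proof.
by move=> /meet_idPl le_ab; apply/imp_eq_top => x ax; rewrite le_ab joinC ax.1.
Qed.

End ComplementImplication.

Theorem theorem3 (d : Order.disp_t) (L : tbLatticeType d)
  (Hcompl : complemented (L := L)) (H01 : (\bot : L) != \top) (a b c : L) :
  (* (i) *)
  (imp a \bot = cplt a /\ imp \top a = sing a) /\
  (* (ii) *)
  (a <= b -> imp a b = sing \top) /\
  (* (iii) *)
  (imp a b = sing \top <-> cplt2 a (a `&` b)) /\
  (* (iv) *)
  (cplt a b -> imp a b = cplt a) /\
  (* (v) *)
  (b <= c -> le1 (imp a b) (imp a c) /\ le2 (imp a b) (imp a c)) /\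
  (* (vi) *)
  (imp a b = sing \top -> imp a c = sing \top -> meetclosedS (cplt2 a) ->
     imp a (b `&` c) = sing \top) /\
  (* (vii) *)
  (subsetS (cplt2 a) (cplt2 b) -> imp a b = sing \top -> imp b a = sing \top).
Proof.
have imp_topE := imp_eq_topE Hcompl.
split; first by split; [rewrite imp_meet0 ?meetx0 | exact: imp_top_l].
split; first exact: imp_le_top.
split; first exact: imp_topE.
split; first by case=> _ /imp_meet0.
split; first by move=> le_bc; split; [apply: imp_le1 | apply: imp_le2].
split.
  move=> /imp_topE ab2 /imp_topE ac2 meet_closed; apply/imp_topE.
  by rewrite -[a in a `&` _]meetxx meetACA; apply: meet_closed.
by move=> sub /imp_topE ab2; apply/imp_topE; rewrite meetC; apply: sub.
Qed.
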